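(* Let $(s_i)_{i\in\mathbb{Z}}$ be a strictly increasing bi-infinite real sequence, unbounded above and below, and let $F:\mathbb{R}^2\to\mathbb{R}^d$ satisfy $$F(s,t)=\frac{s-s_i}{s_{i+1}-s_i}F(s_{i+1},t)+\frac{s_{i+1}-s}{s_{i+1}-s_i}F(s_i,t),\qquad s\in[s_i,s_{i+1}],\ t\in\mathbb{R},\ i\in\mathbb{Z}.$$ Suppose $\|[\sigma_1,\sigma_2;\tau_1,\tau_2]F\|_\infty\le L$ whenever $\sigma_1\ne\sigma_2$ both lie in $[s_i,s_{i+1}]$ for some $i\in\mathbb{Z}$ and $\tau_1\ne\tau_2$ are arbitrary reals. Then $F$ has the BMSDD property with constant $L$ in $\mathbb{R}^2$.
   Context: For $\sigma_1\ne\sigma_2$, $\tau_1\ne\tau_2$, $[\sigma_1,\sigma_2;\tau_1,\tau_2]F=\frac{F(\sigma_1,\tau_1)+F(\sigma_2,\tau_2)-F(\sigma_2,\tau_1)-F(\sigma_1,\tau_2)}{(\sigma_1-\sigma_2)(\tau_1-\tau_2)}$. $F$ has the BMSDD property with constant $L$ in $\mathbb{R}^2$ if $\|[\sigma_1,\sigma_2;\tau_1,\tau_2]F\|_\infty\le L$ for all reals $\sigma_1\ne\sigma_2$, $\tau_1\ne\tau_2$. *)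

From HB Require Import structures.
From mathcomp Require Import all_boot all_order all_algebra.
From mathcomp Require Import reals.
Set Implicit Arguments. Unset Strict Implicit. Unset Printing Implicit Defensive.
Import Order.TTheory GRing.Theory Num.Theory.
Local Open Scope ring_scope.

Definition supnorm {R : realType} {d : nat} (v : 'rV[R]_d) : R :=
  \big[Num.max/0]_(j < d) `|v ord0 j|.

Definition mdd {R : realType} {d : nat} (F : R -> R -> 'rV[R]_d)
  (s1 s2 t1 t2 : R) : 'rV[R]_d :=
  ((s1 - s2) * (t1 - t2))^-1 *: (F s1 t1 + F s2 t2 - F s2 t1 - F s1 t2).

Definition BMSDD {R : realType} {d : nat} (F : R -> R -> 'rV[R]_d) (L : R) : Prop :=
  forall s1 s2 t1 t2 : R, s1 != s2 -> t1 != t2 -> supnorm (mdd F s1 s2 t1 t2) <= L.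

From HB Require Import structures.
From mathcomp Require Import all_boot all_order all_algebra.
From mathcomp Require Import reals.
From mathcomp Require Import ring lra.
Set Implicit Arguments. Unset Strict Implicit. Unset Printing Implicit Defensive.
Import Order.TTheory GRing.Theory Num.Theory.
Local Open Scope ring_scope.

(* Fix t1 != t2 and a coordinate j, and let g x := F(x,t1)_j - F(x,t2)_j, so
   that the j-th coordinate of [x1,x2;t1,t2]F is (g x1 - g x2) / ((x1 - x2)(t1 - t2)).
   The local hypothesis makes g (L |t1 - t2|)-Lipschitz on every closed cell
   [s_i, s_(i+1)]; Lipschitz bounds on adjacent closed intervals add up through
   the common endpoint, and the cells cover R, so g is (L |t1 - t2|)-Lipschitz on
   all of R, which is the global bound. *)

Section SupNorm.

Variables (R : realType) (d : nat).

Lemma supnorm_ge0 (v : 'rV[R]_d) : 0 <= supnorm v.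
Proof. exact: bigmax_ge_id. Qed.

Lemma ler_supnorm (v : 'rV[R]_d) (j : 'I_d) : `|v ord0 j| <= supnorm v.
Proof. exact: le_bigmax. Qed.

Lemma supnorm_le (v : 'rV[R]_d) (L : R) :
  0 <= L -> (forall j, `|v ord0 j| <= L) -> supnorm v <= L.
Proof. by move=> L0 vL; apply: bigmax_le. Qed.

End SupNorm.

Lemma mdd_entry_le (R : realType) (d : nat) (F : R -> R -> 'rV[R]_d)
    (x1 x2 t1 t2 L : R) (j : 'I_d) : x1 != x2 -> t1 != t2 ->
  (`|mdd F x1 x2 t1 t2 ord0 j| <= L) =
  (`|(F x1 t1 - F x1 t2) ord0 j - (F x2 t1 - F x2 t2) ord0 j|
     <= L * `|t1 - t2| * `|x1 - x2|).
Proof.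
move=> x12 t12; rewrite /mdd !mxE mulrC normrM normfV ler_pdivrMr; last first.
  by rewrite normr_gt0 mulf_neq0 ?subr_eq0.
by rewrite normrM; congr (`|_| <= _); ring.
Qed.

Section CellPartition.

Variables (R : realType) (s : int -> R).
Hypothesis s_incr : forall i : int, s i < s (i + 1).

Lemma s_le_addn (i : int) (n : nat) : s i <= s (i + n%:Z).
Proof.
elim: n i => [|n IHn] i; first by rewrite addr0.
by rewrite intS addrA; apply: le_trans (IHn (i + 1)); apply: ltW.
Qed.

Lemma s_nondecreasing (i j : int) : i <= j -> s i <= s j.
Proof.
move=> ij; have -> : j = i + `|j - i|%N%:Z by rewrite gez0_abs ?subr_ge0 // subrKC.
exact: s_le_addn.
Qed.

Variables (V : normedZmodType R) (g : R -> V) (K : R).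
Hypothesis g_lip_cell : forall i x1 x2, s i <= x1 <= s (i + 1) ->
  s i <= x2 <= s (i + 1) -> `|g x1 - g x2| <= K * `|x1 - x2|.

Lemma lipschitz_cells_addn (n : nat) (i : int) (x y : R) :
  s i <= x -> x <= y -> y <= s (i + n%:Z) -> `|g x - g y| <= K * (y - x).
Proof.
elim: n i x => [|n IHn] i x ix xy yn.
  have -> : x = y by rewrite addr0 in yn; lra.
  by rewrite !subrr normr0 mulr0.
rewrite intS addrA in yn; have si := s_incr i.
have [s1x|xs1] := lerP (s (i + 1)) x; first exact: IHn s1x xy yn.
have gx1 : `|g x - g (s (i + 1))| <= K * (s (i + 1) - x).
  rewrite distrC -[s (i + 1) - x]ger0_norm ?subr_ge0 ?(ltW xs1) //.
  by apply: (g_lip_cell (i := i)); lra.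
have [ys1|s1y] := lerP y (s (i + 1)).
  rewrite -[y - x]ger0_norm ?subr_ge0 // distrC; apply: (g_lip_cell (i := i)); lra.
have g1y := IHn (i + 1) (s (i + 1)) (lexx _) (ltW s1y) yn.
have := ler_distD (g (s (i + 1))) (g x) (g y).
have -> : K * (y - x) = K * (s (i + 1) - x) + K * (y - s (i + 1)) by ring.
lra.
Qed.

Hypothesis s_unb_above : forall M : R, exists i : int, M < s i.
Hypothesis s_unb_below : forall M : R, exists i : int, s i < M.

Lemma lipschitz_cells (x y : R) : `|g x - g y| <= K * `|x - y|.
Proof.
wlog xy : x y / x <= y.
  move=> gen; have [/gen //|/ltW yx] := leP x y.
  by rewrite distrC (distrC x); apply: gen.
have [a sax] := s_unb_below x; have [b ysb] := s_unb_above y.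
have ab : a <= b.
  by rewrite leNgt; apply/negP => /ltW /s_nondecreasing; lra.
rewrite (distrC x) ger0_norm ?subr_ge0 //.
apply: (lipschitz_cells_addn (n := `|b - a|%N) (ltW sax) xy).
by rewrite gez0_abs ?subr_ge0 // subrKC ltW.
Qed.

End CellPartition.

Theorem lemma6 (R : realType) (d : nat) (s : int -> R)
  (F : R -> R -> 'rV[R]_d) (L : R)
  (s_incr : forall i : int, s i < s (i + 1))
  (s_unb_above : forall M : R, exists i : int, M < s i)
  (s_unb_below : forall M : R, exists i : int, s i < M)
  (F_pl : forall (i : int) (x t : R), s i <= x <= s (i + 1) ->
     F x t = ((x - s i) / (s (i + 1) - s i)) *: F (s (i + 1)) t
           + ((s (i + 1) - x) / (s (i + 1) - s i)) *: F (s i) t)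
  (F_loc : forall (i : int) (x1 x2 t1 t2 : R),
     x1 != x2 -> s i <= x1 <= s (i + 1) -> s i <= x2 <= s (i + 1) ->
     t1 != t2 -> supnorm (mdd F x1 x2 t1 t2) <= L) :
  BMSDD F L.
Proof.
have L0 : 0 <= L.
  have s01 := s_incr 0.
  apply: le_trans (supnorm_ge0 _) (F_loc 0 (s 0) (s (0 + 1)) 0 1 _ _ _ _).
  - by rewrite lt_eqF.
  - by rewrite lexx ltW.
  - by rewrite lexx ltW.
  - by rewrite eq_sym oner_eq0.
move=> s1 s2 t1 t2 s12 t12; apply: supnorm_le => // j.
pose g x := (F x t1 - F x t2) ord0 j.
have g_lip_cell i x1 x2 : s i <= x1 <= s (i + 1) -> s i <= x2 <= s (i + 1) ->
    `|g x1 - g x2| <= L * `|t1 - t2| * `|x1 - x2|.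
  move=> x1i x2i; have [->|x12] := eqVneq x1 x2.
    by rewrite !subrr normr0 mulr0.
  rewrite -mdd_entry_le //.
  exact: le_trans (ler_supnorm _ j) (F_loc i x1 x2 t1 t2 x12 x1i x2i t12).
by rewrite mdd_entry_le // (lipschitz_cells s_incr g_lip_cell).
Qed.
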